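(* Let $L=(l_1,\dots,l_n)$, $n\ge 4$, be a generic length vector satisfying the strict triangle inequality, and let $l_a\ge l_b\ge l_c$ be its three largest entries (for distinct indices $a,b,c$). Suppose $l_b+l_c<|L|/2$. Then for every vertex $(I,J,K)$ of $\Gamma(L)$ there is a path in $\Gamma(L)$ of length at most $6$ from $(I,J,K)$ to its mirror image $(J,I,K)$.
   Context: Let $n\ge 4$ and $L=(l_1,\dots,l_n)$ be positive reals with $l_i<\sum_{j\ne i}l_j$ for every $i$ (strict triangle inequality), and generic: there is no $J\subseteq[n]$ with $\sum_{i\in J}l_i=\sum_{i\notin J}l_i$. Here $[n]=\{1,\dots,n\}$ and $|L|=\sum_{i=1}^n l_i$. A set $I\subseteq[n]$ is short if $\sum_{i\in I}l_i<|L|/2$ and long otherwise. A cyclically ordered partition of $[n]$ into $k$ parts is a sequence $(A_1,\dots,A_k)$ of pairwise disjoint nonempty sets with union $[n]$, considered up to cyclic shifts $(A_1,\dots,A_k)\sim(A_2,\dots,A_k,A_1)$; there is no ordering inside a part. It is admissible if every part is short. The graph $\Gamma(L)$ has as vertices the admissible cyclically ordered partitions of $[n]$ into 3 parts, written $(I,J,K)$, and as edges the admissible cyclically ordered partitions into 4 parts $(A,B,C,D)$; such an edge is incident to each of the partitions $(A\cup B,C,D)$, $(A,B\cup C,D)$, $(A,B,C\cup D)$, $(D\cup A,B,C)$ that is admissible. Equivalently, two vertices are adjacent iff one is obtained from the other by moving a nonempty proper subset of one part into another part. The length of a path is its number of edges. The mirror image of a vertex $(I,J,K)$ is the vertex $(J,I,K)$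 (same parts, reversed cyclic order). (The condition $l_b+l_c<|L|/2$ is equivalent to connectedness of the moduli space of planar configurations of $L$.) *)

From HB Require Import structures.
From mathcomp Require Import all_boot all_order all_algebra.
Set Implicit Arguments. Unset Strict Implicit. Unset Printing Implicit Defensive.
Import Order.TTheory GRing.Theory Num.Theory.
Local Open Scope ring_scope.

Section Defs.
Variables (R : realFieldType) (n : nat) (l : 'I_n -> R).

Definition totlen : R := \sum_(i < n) l i.

Definition short (S : {set 'I_n}) : bool := \sum_(i in S) l i < totlen / 2%:R.

(* a triple (I,J,K) of sets, read as a cyclically ordered 3-partition *)
Definition triple := ({set 'I_n} * {set 'I_n} * {set 'I_n})%type.

Definition mk3 (I J K : {set 'I_n}) : triple := (I, J, K).

Definition adm3 (t : triple) : bool :=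
  let: (X, Y, Z) := t in
  [&& X != set0, Y != set0, Z != set0,
      [disjoint X & Y], [disjoint Y & Z], [disjoint X & Z],
      X :|: Y :|: Z == setT &
      [&& short X, short Y & short Z]].

Definition adm4 (A B C D : {set 'I_n}) : bool :=
  [&& A != set0, B != set0, C != set0, D != set0,
      [disjoint A & B], [disjoint A & C], [disjoint A & D],
      [disjoint B & C], [disjoint B & D], [disjoint C & D],
      A :|: B :|: C :|: D == setT &
      [&& short A, short B, short C & short D]].

Definition cyc_eq (t s : triple) : Prop :=
  let: (X, Y, Z) := t in s = (X, Y, Z) \/ s = (Y, Z, X) \/ s = (Z, X, Y).

Definition merges (A B C D : {set 'I_n}) : seq triple :=
  [:: (A :|: B, C, D); (A, B :|: C, D); (A, B, C :|: D); (D :|: A, B, C)].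

(* t and s are adjacent in Gamma(L): there is an edge (an admissible
   4-partition) incident to both (i.e. both are admissible merges of it) *)
Definition adj (t s : triple) : Prop :=
  exists A B C D, adm4 A B C D /\
    exists2 m1, m1 \in merges A B C D &
    exists2 m2, m2 \in merges A B C D &
      [/\ adm3 m1, adm3 m2, m1 != m2, cyc_eq m1 t & cyc_eq m2 s].

Fixpoint walk (t : triple) (p : seq triple) : Prop :=
  match p with
  | [::] => True
  | s :: p' => adj t s /\ walk s p'
  end.

End Defs.

From HB Require Import structures.
From mathcomp Require Import all_boot all_order all_algebra.
From mathcomp Require Import ring lra.
Import Order.TTheory GRing.Theory Num.Theory.
Local Open Scope ring_scope.
Set Implicit Arguments. Unset Strict Implicit. Unset Printing Implicit Defensive.

(* Let a be the index of the longest side.  Any two sides other than a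
   form a short set, because l_e + l_f <= l_b + l_c < |L|/2.  Up to a
   cyclic shift, a vertex is (X, Y, Z) with a in X, and its mirror image
   is (X, Z, Y).  We swap Y and Z while keeping X fixed (or enlarged):

   - If e in Y and f in Z are such that X + e and X + f are long, then
       (X,Y,Z) - (X,{e},~(X+e)) - (X,{e,f},~(X+e+f)) - (X,{f},~(X+f)) - (X,Z,Y)
     is a path of length 4 (lemma swap_through_pairs).
   - In general, let m be a longest element of Y u Z, say m in Z, and let
     S be a largest subset of Y with X u S short.  Then S <> Y, and for
     e in Y \ S both X u S + e and X u S + m are long; moving S into X,
     applying the previous step and moving S back costs 1 + 4 + 1 edges
     (lemma swap_second_third). *)

Ltac mem_cases :=
  repeat match goal with |- context [?x \in ?A] => case: (x \in A) end.

Section Partitions.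
Variables (R : realFieldType) (n : nat) (l : 'I_n -> R).

Definition part3 (X Y Z : {set 'I_n}) :=
  forall i, ((i \in X) + (i \in Y) + (i \in Z) = 1)%N.

Lemma adm3P (X Y Z : {set 'I_n}) :
  reflect [/\ X != set0, Y != set0, Z != set0, part3 X Y Z &
              [/\ short l X, short l Y & short l Z]]
          (adm3 l (X, Y, Z)).
Proof.
rewrite /adm3 -!setI_eq0; apply: (iffP idP).
- case/and5P => X0 Y0 Z0 dXY /and4P [dYZ dXZ cover /and3P [sX sY sZ]].
  split=> // i; move/eqP/setP: cover => /(_ i).
  move/eqP/setP: dXY => /(_ i); move/eqP/setP: dYZ => /(_ i).
  by move/eqP/setP: dXZ => /(_ i); rewrite !inE; mem_cases.
- case=> -> -> -> count [-> -> ->]; rewrite !andbT /=.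
  by apply/and4P; split; apply/eqP/setP => i; rewrite !inE; move: (count i);
    mem_cases.
Qed.

Lemma adm3_rot (X Y Z : {set 'I_n}) : adm3 l (X, Y, Z) -> adm3 l (Y, Z, X).
Proof.
case/adm3P => X0 Y0 Z0 count [sX sY sZ]; apply/adm3P; split=> // i.
by move: (count i); mem_cases.
Qed.

Lemma adm3_swap (X Y Z : {set 'I_n}) : adm3 l (X, Y, Z) -> adm3 l (X, Z, Y).
Proof.
case/adm3P => X0 Y0 Z0 count [sX sY sZ]; apply/adm3P; split=> // i.
by move: (count i); mem_cases.
Qed.

Lemma adm3_third (X Y Z : {set 'I_n}) : adm3 l (X, Y, Z) -> Z = ~: (X :|: Y).
Proof.
case/adm3P => _ _ _ count _; apply/setP => i; rewrite !inE.
by move: (count i); mem_cases.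
Qed.

Lemma adm4I (A B C D : {set 'I_n}) :
  A != set0 -> B != set0 -> C != set0 -> D != set0 ->
  (forall i, ((i \in A) + (i \in B) + (i \in C) + (i \in D) = 1)%N) ->
  short l A -> short l B -> short l C -> short l D -> adm4 l A B C D.
Proof.
move=> A0 B0 C0 D0 count sA sB sC sD.
rewrite /adm4 A0 B0 C0 D0 sA sB sC sD -!setI_eq0 !andbT /=.
by repeat (apply/andP; split); apply/eqP/setP => i; rewrite !inE;
  move: (count i); mem_cases.
Qed.

End Partitions.

Section Weights.
Variables (R : realFieldType) (n : nat) (l : 'I_n -> R).
Hypothesis l_pos : forall i, 0 < l i.
Hypothesis l_generic :
  forall S : {set 'I_n}, \sum_(i in S) l i != \sum_(i in ~: S) l i.

Local Notation w S := (\sum_(i in S) l i).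

Lemma weight_compl (S : {set 'I_n}) : w (~: S) = totlen l - w S.
Proof.
apply/eqP; rewrite eq_sym subr_eq addrC /totlen (bigID (mem S)) /=.
by apply/eqP; congr (_ + _); apply: eq_bigl => i; rewrite inE.
Qed.

Lemma short_sub (A B : {set 'I_n}) : A \subset B -> short l B -> short l A.
Proof.
move=> AB; apply: le_lt_trans.
rewrite [leRHS](big_setID A) (setIidPr AB) /= lerDl.
by apply: sumr_ge0 => i _; apply: ltW.
Qed.

Lemma short_compl (S : {set 'I_n}) : short l (~: S) = ~~ short l S.
Proof.
have : w S != totlen l / 2%:R.
  apply: contra (l_generic S) => /eqP wS.
  by rewrite weight_compl wS; apply/eqP; field.
rewrite /short weight_compl -leNgt neq_lt.
by case/orP => h; apply/idP/idP => ?; lra.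
Qed.

Lemma long_setU1 (Y : {set 'I_n}) e m :
  e \notin Y -> m \notin Y -> l e <= l m ->
  ~~ short l (e |: Y) -> ~~ short l (m |: Y).
Proof.
move=> eY mY lem; rewrite /short -!leNgt !big_setU1 //= => h.
by apply: (le_trans h); rewrite lerD2r.
Qed.

Lemma adm3_complI (X Y : {set 'I_n}) :
  X != set0 -> Y != set0 -> [disjoint X & Y] ->
  short l X -> short l Y -> ~~ short l (X :|: Y) ->
  adm3 l (X, Y, ~: (X :|: Y)).
Proof.
move=> X0 Y0 dXY sX sY lXY; apply/adm3P; split=> //.
- apply/negP => /eqP E; have : ~: Y \subset X.
    by apply/subsetP => i; move/setP: E => /(_ i); rewrite !inE; mem_cases.
  by move/short_sub/(_ sX); rewrite short_compl sY.
- move: dXY; rewrite -setI_eq0 => /eqP/setP dXY i.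
  by move: (dXY i); rewrite !inE; mem_cases.
- by rewrite short_compl.
Qed.

End Weights.

Section Graph.
Variables (R : realFieldType) (n : nat) (l : 'I_n -> R).
Hypothesis l_pos : forall i, 0 < l i.
Implicit Types (t s u : triple n) (X Q Z : {set 'I_n}).

Lemma cyc_refl t : cyc_eq t t.
Proof. by case: t => [[X Y] Z]; left. Qed.

Lemma cyc_sym t s : cyc_eq t s -> cyc_eq s t.
Proof. by case: t => [[X Y] Z]; rewrite /cyc_eq => -[|[|]] -> /=; tauto. Qed.

Lemma cyc_trans t s u : cyc_eq t s -> cyc_eq s u -> cyc_eq t u.
Proof.
by case: t => [[X Y] Z]; rewrite /cyc_eq => -[|[|]] -> /= [|[|]] ->; tauto.
Qed.

Lemma adj_cyc t s t' s' :
  adj l t s -> cyc_eq t t' -> cyc_eq s s' -> adj l t' s'.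
Proof.
move=> [A [B [C [D [adm [m1 m1M [m2 m2M [a1 a2 m12 c1 c2]]]]]]]] tt' ss'.
exists A, B, C, D; split=> //; exists m1 => //; exists m2 => //.
by split=> //; [apply: cyc_trans tt' | apply: cyc_trans ss'].
Qed.

Lemma adj_sym t s : adj l t s -> adj l s t.
Proof.
move=> [A [B [C [D [adm [m1 m1M [m2 m2M [a1 a2 m12 c1 c2]]]]]]]].
by exists A, B, C, D; split=> //; exists m2 => //; exists m1; rewrite 1?eq_sym.
Qed.

(* Moving a nonempty proper subset of the second part into the third part
   is an edge: the edge is the 4-partition (Q', Q \ Q', Z, X). *)
Lemma adj_shrink X Q Z Q' Z' :
  adm3 l (X, Q, Z) -> adm3 l (X, Q', Z') -> Q' \proper Q ->
  adj l (X, Q, Z) (X, Q', Z').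
Proof.
move=> tQ tQ' /properP [subQ [x xQ xQ']].
case/adm3P: (tQ) => X0 _ Z0 cQ [sX sQ sZ].
case/adm3P: (tQ') => _ Q'0 _ _ [_ sQ' _].
have sub i : (i \in Q') ==> (i \in Q) by apply/implyP/(subsetP subQ).
pose S := Q :\: Q'.
have EQ : Q' :|: S = Q.
  by apply/setP => i; rewrite !inE; move: (sub i); mem_cases.
have EZ : S :|: Z = Z'.
  rewrite (adm3_third tQ) (adm3_third tQ'); apply/setP => i; rewrite !inE.
  by move: (cQ i) (sub i); mem_cases.
exists Q', S, Z, X; split.
  apply: adm4I => //.
  - by apply/set0Pn; exists x; rewrite !inE xQ xQ'.
  - by move=> i; rewrite !inE; move: (cQ i) (sub i); mem_cases.
  - by apply: (short_sub l_pos _ sQ); rewrite subsetDl.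
exists (Q' :|: S, Z, X); first exact: mem_head.
exists (Q', S :|: Z, X); first by rewrite !inE eqxx orbT.
rewrite EQ EZ; split; [exact: adm3_rot | exact: adm3_rot | | by right; right..].
by apply/negP => /eqP [E _]; move: xQ'; rewrite -E xQ.
Qed.

Lemma walk_cyc t t' p : cyc_eq t t' -> walk l t p -> walk l t' p.
Proof.
case: p => [|s p] //= tt' [ts sp]; split=> //.
exact: adj_cyc ts tt' (cyc_refl s).
Qed.

Lemma walk_cat t p q :
  walk l t (p ++ q) <-> walk l t p /\ walk l (last t p) q.
Proof. by elim: p t => [|s p IH] t /=; [tauto | rewrite IH; tauto]. Qed.

Lemma last_rev_belast (T : Type) (x : T) p :
  last (last x p) (rev (belast x p)) = x.
Proof. by case: p => [|y p] //=; rewrite rev_cons last_rcons. Qed.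

Lemma walk_rev t p : walk l t p -> walk l (last t p) (rev (belast t p)).
Proof.
elim: p t => [|s p IH] t //= [ts sp].
rewrite rev_cons -cats1 walk_cat /= last_rev_belast; split; first exact: IH.
by split=> //; apply: adj_sym.
Qed.

Definition reach k t s :=
  exists p : seq (triple n),
    (size p <= k)%N /\ walk l t p /\ cyc_eq (last t p) s.

Lemma reach_refl k t : reach k t t.
Proof. by exists [::]; split=> //; split=> //; apply: cyc_refl. Qed.

Lemma reach_adj t s : adj l t s -> reach 1 t s.
Proof.
by move=> ts; exists [:: s]; split=> //; split; [split | apply: cyc_refl].
Qed.

Lemma reach_cyc k t t' s s' :
  cyc_eq t t' -> cyc_eq s s' -> reach k t s -> reach k t' s'.
Proof.
move=> tt' ss' [p [sz [wp lp]]]; exists p; split=> //.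
split; first exact: walk_cyc tt' wp.
case: p {sz wp} lp => [|y p] /= lp; last exact: cyc_trans lp ss'.
exact: cyc_trans (cyc_sym tt') (cyc_trans lp ss').
Qed.

Lemma reach_trans k1 k2 t s u :
  reach k1 t s -> reach k2 s u -> reach (k1 + k2) t u.
Proof.
move=> [p [szp [wp lp]]] [q [szq [wq lq]]]; exists (p ++ q).
split; first by rewrite size_cat leq_add.
split; first by apply/walk_cat; split=> //; apply: walk_cyc (cyc_sym lp) wq.
rewrite last_cat; case: q {szq} wq lq => [|y q] //= _ lq.
exact: cyc_trans lp lq.
Qed.

Lemma reach_sym k t s : reach k t s -> reach k s t.
Proof.
move=> [p [sz [wp lp]]]; exists (rev (belast t p)).
split; first by rewrite size_rev size_belast.
split; first exact: walk_cyc lp (walk_rev wp).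
case: p {sz wp} lp => [|y p] /= lp; first exact: cyc_sym.
by rewrite rev_cons last_rcons; apply: cyc_refl.
Qed.

Lemma reach1_sub X Q Z Q' Z' :
  adm3 l (X, Q, Z) -> adm3 l (X, Q', Z') -> Q' \subset Q ->
  reach 1 (X, Q, Z) (X, Q', Z').
Proof.
move=> tQ tQ' subQ; case: (eqVneq Q' Q) => [EQ | NQ].
  by rewrite (adm3_third tQ) (adm3_third tQ') EQ; apply: reach_refl.
by apply/reach_adj/adj_shrink => //; rewrite properEneq NQ.
Qed.

Lemma reach1_sup X Q Z Q' Z' :
  adm3 l (X, Q, Z) -> adm3 l (X, Q', Z') -> Q \subset Q' ->
  reach 1 (X, Q, Z) (X, Q', Z').
Proof. by move=> tQ tQ' subQ; apply/reach_sym/reach1_sub. Qed.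

End Graph.

Section Swap.
Variables (R : realFieldType) (n : nat) (l : 'I_n -> R).
Hypothesis l_pos : forall i, 0 < l i.
Hypothesis l_generic :
  forall S : {set 'I_n}, \sum_(i in S) l i != \sum_(i in ~: S) l i.

Lemma swap_through_pairs X A B e f :
  adm3 l (X, A, B) -> e \in A -> f \in B -> short l [set e; f] ->
  ~~ short l (X :|: [set e]) -> ~~ short l (X :|: [set f]) ->
  reach l 4 (X, A, B) (X, B, A).
Proof.
move=> tA eA fB sef lXe lXf.
case/adm3P: (tA) => X0 _ _ cX [sX _ _].
have dXAB : [disjoint X & A :|: B].
  rewrite -setI_eq0; apply/eqP/setP => i; rewrite !inE.
  by move: (cX i); mem_cases.
have node (Y : {set 'I_n}) : Y != set0 -> Y \subset A :|: B -> short l Y ->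
    ~~ short l (X :|: Y) -> adm3 l (X, Y, ~: (X :|: Y)).
  by move=> Y0 YAB sY lXY; apply: adm3_complI => //; apply: disjointWr YAB dXAB.
have nonempty (Y : {set 'I_n}) x : x \in Y -> Y != set0.
  by move=> xY; apply/set0Pn; exists x.
have eAB : [set e] \subset A :|: B by rewrite sub1set inE eA.
have fAB : [set f] \subset A :|: B by rewrite sub1set inE fB orbT.
have e_ef : [set e] \subset [set e; f] by rewrite sub1set setU11.
have f_ef : [set f] \subset [set e; f] by rewrite sub1set !inE eqxx orbT.
have lXef : ~~ short l (X :|: [set e; f]).
  by apply: contra lXe; apply: (short_sub l_pos); rewrite setUS.
have tE := node _ (nonempty _ _ (set11 e)) eAB (short_sub l_pos e_ef sef) lXe.
have tF := node _ (nonempty _ _ (set11 f)) fAB (short_sub l_pos f_ef sef) lXf.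
have efAB : [set e; f] \subset A :|: B by rewrite subUset eAB.
have tEF := node _ (nonempty _ _ (setU11 e _)) efAB sef lXef.
have eA1 : [set e] \subset A by rewrite sub1set.
have fB1 : [set f] \subset B by rewrite sub1set.
have step1 := reach1_sub l_pos tA tE eA1.
have step2 := reach1_sup l_pos tE tEF e_ef.
have step3 := reach1_sub l_pos tEF tF f_ef.
have step4 := reach1_sup l_pos tF (adm3_swap tA) fB1.
exact: reach_trans (reach_trans (reach_trans step1 step2) step3) step4.
Qed.

Variable a : 'I_n.
Hypothesis short_pairs :
  forall e f : 'I_n, e != a -> f != a -> e != f -> short l [set e; f].

Lemma swap_second_third X P Q m :
  adm3 l (X, P, Q) -> a \in X -> m \in Q ->
  (forall e, e \in P -> l e <= l m) ->
  reach l 6 (X, P, Q) (X, Q, P).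
Proof.
move=> tP aX mQ mmax.
case/adm3P: (tP) => X0 P0 Q0 cX [sX sP sQ].
(* S: a largest subset of P that can be added to X keeping it short. *)
pose admissible (S : {set 'I_n}) := (S \subset P) && short l (X :|: S).
have adm_set0 : admissible set0 by rewrite /admissible sub0set setU0.
case: (arg_maxnP (fun S : {set 'I_n} => #|S|) adm_set0).
move=> S /andP [SP sXS] Smax.
have SPi i : (i \in S) ==> (i \in P) by apply/implyP/(subsetP SP).
have /properP [_ [e eP eS]] : S \proper P.
  rewrite properEneq SP andbT; apply: contraTneq sXS => ->.
  by rewrite -(setCK (X :|: P)) -(adm3_third tP) (short_compl l_generic) sQ.
have lXSe : ~~ short l (e |: (X :|: S)).
  apply/negP => sh; have /Smax : admissible (e |: S).
    by rewrite /admissible subUset sub1set eP SP setUCA.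
  by rewrite /= cardsU1 eS add1n ltnn.
have eXS : e \notin X :|: S.
  by rewrite !inE negb_or eS andbT; move: (cX e) eP; mem_cases.
have mXS : m \notin X :|: S by rewrite !inE; move: (cX m) (SPi m) mQ; mem_cases.
have lXSm := long_setU1 eXS mXS (mmax e eP) lXSe.
pose X' := X :|: S; pose P' := P :\: S.
have tP' : adm3 l (X', P', Q).
  apply/adm3P; split=> //.
  - by apply/set0Pn; exists a; rewrite inE aX.
  - by apply/set0Pn; exists e; rewrite inE eS eP.
  - by move=> i; rewrite !inE; move: (cX i) (SPi i); mem_cases.
  - by split=> //; apply: (short_sub l_pos _ sP); rewrite subsetDl.
have step1 : reach l 1 (X, P, Q) (X', P', Q).
  apply: reach_cyc (reach1_sup l_pos (adm3_rot (adm3_rot tP))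
      (adm3_rot (adm3_rot tP')) (subsetUl X S)); by right; left.
have step2 : reach l 4 (X', P', Q) (X', Q, P').
  have eP' : e \in P' by rewrite inE eS eP.
  apply: (swap_through_pairs tP' eP' mQ); last 2 first.
  - by rewrite /X' setUC; exact: lXSe.
  - by rewrite /X' setUC; exact: lXSm.
  apply: short_pairs.
  - by apply: contraNneq eXS => ->; rewrite inE aX.
  - by apply: contraNneq mXS => ->; rewrite inE aX.
  - by apply: contraTneq mQ => <-; move: (cX e) eP; mem_cases.
have step3 : reach l 1 (X', Q, P') (X, Q, P).
  apply: reach_cyc (reach1_sup l_pos (adm3_rot (adm3_swap tP'))
      (adm3_rot (adm3_swap tP)) (subsetDl P S)); by right; right.
exact: reach_trans (reach_trans step1 step2) step3.
Qed.

Lemma swap_around X Y Z :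
  adm3 l (X, Y, Z) -> a \in X -> reach l 6 (X, Y, Z) (X, Z, Y).
Proof.
move=> tY aX; case/adm3P: (tY) => _ /set0Pn [y yY] _ _ _.
have yYZ : y \in Y :|: Z by rewrite inE yY.
case: (@arg_maxP _ _ _ y (fun i => i \in Y :|: Z) l yYZ) => m + mmax.
rewrite inE => /orP [mY | mZ].
- apply/reach_sym/(swap_second_third (adm3_swap tY) aX mY) => e eZ.
  by apply: mmax; rewrite inE eZ orbT.
- apply: (swap_second_third tY aX mZ) => e eY.
  by apply: mmax; rewrite inE eY.
Qed.

End Swap.

Lemma pair_le_two_largest (R : numDomainType) n (l : 'I_n -> R)
    (a b c : 'I_n) :
  l c <= l b -> (forall i, i != a -> i != b -> i != c -> l i <= l c) ->
  forall e f, e != a -> f != a -> e != f -> l e + l f <= l b + l c.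
Proof.
move=> lcb lrest.
have le_c i : i != a -> i != b -> l i <= l c.
  by move=> ia ib; case: (eqVneq i c) => [-> // | ic]; apply: lrest.
have le_b i : i != a -> l i <= l b.
  move=> ia; case: (eqVneq i b) => [-> // | ib].
  by apply: le_trans lcb; apply: le_c.
move=> e f ea fa ef; case: (eqVneq e b) => [eb | eb].
- by rewrite eb lerD2l; apply: le_c; rewrite // -eb eq_sym.
- by rewrite addrC; apply: lerD; [apply: le_b | apply: le_c].
Qed.

Theorem mainTheorem6 (R : realFieldType) (n : nat) (l : 'I_n -> R)
    (a b c : 'I_n) :
  (4 <= n)%N ->
  (forall i, 0 < l i) ->
  (forall i, l i < \sum_(j < n | j != i) l j) ->
  (forall S : {set 'I_n}, \sum_(i in S) l i != \sum_(i in ~: S) l i) ->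
  a != b -> a != c -> b != c ->
  l b <= l a -> l c <= l b ->
  (forall i, i != a -> i != b -> i != c -> l i <= l c) ->
  l b + l c < totlen l / 2%:R ->
  forall I J K : {set 'I_n}, adm3 l (mk3 I J K) ->
  exists p : seq (triple n),
    (size p <= 6)%N /\ walk l (mk3 I J K) p /\
    cyc_eq (last (mk3 I J K) p) (mk3 J I K).
Proof.
move=> _ l_pos _ l_generic _ _ _ _ lcb lrest short_bc I J K tI.
have short_pairs e f : e != a -> f != a -> e != f -> short l [set e; f].
  move=> ea fa ef; rewrite /short big_setU1 ?inE //= big_set1.
  exact: le_lt_trans (pair_le_two_largest lcb lrest ea fa ef) short_bc.
have swap := swap_around l_pos l_generic short_pairs.
case/adm3P: (tI) => _ _ _ cI _; move: (cI a).
case aI: (a \in I); case aJ: (a \in J); case aK: (a \in K) => // _.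
- by apply: reach_cyc (swap _ _ _ tI aI); [left | right; right].
- by apply: reach_cyc (swap _ _ _ (adm3_rot tI) aJ); [right; right | left].
- apply: reach_cyc (swap _ _ _ (adm3_rot (adm3_rot tI)) aK); by right; left.
Qed.
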